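(* For every $\alpha<1.5$ there exist reals $0<v_1<\dots<v_n$ and a distribution $\mathcal{D}$ on $\{v_1,\dots,v_n\}$ with full support such that no signaling scheme for $\mathcal{D}$ is $\alpha$-majorized.
   Context: Values and prior. $v_0:=0$, $f_{\mathcal{D}}$ is the mass function of $\mathcal{D}$, $F_{\mathcal{D}}$ its CDF, and $G_S(p)=\Pr_{v\sim S}[v\ge p]$. Signals and pricing. A signal is a distribution $S$ on $\{v_1,\dots,v_n\}$. The seller posts $p^*_S$, the smallest $v$ in the support of $S$ maximizing $v\,G_S(v)$. The surplus of value $v$ is $cs_v(S)=\mathbb{1}[v\ge p^*_S](v-p^*_S)$. Signaling schemes. A signaling scheme is $\mathcal{Z}=\{(S_q,\gamma_q)\}$ with $\gamma_q\ge0$, $\sum\gamma_q=1$ and $\sum_q\gamma_q f_{S_q}=f_{\mathcal{D}}$. Its expected consumer surplus at $v_i$ is $cs_{v_i}(\mathcal{Z})=\sum_q cs_{v_i}(S_q)\gamma_q f_{S_q}(v_i)/f_{\mathcal{D}}(v_i)$. Majorization. The surplus-mass function $s_{\mathcal{Z}}$ on $(0,1]$ equals $cs_{v_i}(\mathcal{Z})$ on $(F_{\mathcal{D}}(v_{i-1}),F_{\mathcal{D}}(v_i)]$. For a finite step function $f$ on $(0,1]$, $\mathrm{Pf}(f,m)=\int_0^m f_{\mathrm{sorted}}$, where $f_{\mathrm{sorted}}$ rearranges the steps of $f$ in ascending order. $\mathcal{Z}$ is $\alpha$-majorized if $\alpha\,\mathrm{Pf}(s_{\mathcal{Z}},m)\ge\mathrm{Pf}(s_{\mathcal{Z}'},m)$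 for every signaling scheme $\mathcal{Z}'$ for $\mathcal{D}$ and every $m\in(0,1]$. *)

From HB Require Import structures.
From mathcomp Require Import all_boot all_order all_algebra.
From mathcomp Require Import reals.
Set Implicit Arguments. Unset Strict Implicit. Unset Printing Implicit Defensive.
Import Order.TTheory GRing.Theory Num.Theory.
Local Open Scope ring_scope.

Section SignalDefs.
Variable R : realType.
Variable n : nat.
Variable v : 'I_n -> R.

(* G_S(p) = Pr_{v ~ S}[v >= p]; a signal S is a mass function on the values *)
Definition tailG (S : 'I_n -> R) (p : R) : R := \sum_(j < n | p <= v j) S j.

Definition revenue (S : 'I_n -> R) (i : 'I_n) : R := v i * tailG S (v i).

Definition price_idx (S : 'I_n -> R) : option 'I_n :=
  [pick i | [&& 0 < S i,
              [forall k, (0 < S k) ==> (revenue S k <= revenue S i)] &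
              [forall k, ((0 < S k) && (revenue S k == revenue S i)) ==> (v i <= v k)]]].

Definition price (S : 'I_n -> R) : R :=
  if price_idx S is Some i then v i else 0.

Definition cs (S : 'I_n -> R) (i : 'I_n) : R :=
  if price S <= v i then v i - price S else 0.

Definition is_distribution (g : 'I_n -> R) : Prop :=
  (forall i, 0 <= g i) /\ \sum_(i < n) g i = 1.

Definition signaling_scheme (f : 'I_n -> R) (m : nat)
  (gamma : 'I_m -> R) (S : 'I_m -> 'I_n -> R) : Prop :=
  [/\ forall q, 0 <= gamma q,
      \sum_(q < m) gamma q = 1,
      forall q, is_distribution (S q) &
      forall i, \sum_(q < m) gamma q * S q i = f i].

Definition cs_scheme (f : 'I_n -> R) (m : nat)
  (gamma : 'I_m -> R) (S : 'I_m -> 'I_n -> R) (i : 'I_n) : R :=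
  \sum_(q < m) cs (S q) i * gamma q * S q i / f i.

(* The surplus-mass function as the list of its steps (value, width):
   on (F(v_{i-1}), F(v_i)] it takes value cs_{v_i}(Z); the width is f(v_i). *)
Definition surplus_steps (f : 'I_n -> R) (m : nat)
  (gamma : 'I_m -> R) (S : 'I_m -> 'I_n -> R) : seq (R * R) :=
  [seq (cs_scheme f gamma S i, f i) | i <- enum 'I_n].

End SignalDefs.

(* Integral over (0, x] of the step function whose consecutive steps
   (starting at 0) have the given (value, width). *)
Fixpoint step_integral (R : realType) (l : seq (R * R)) (x : R) : R :=
  match l with
  | [::] => 0
  | (c, w) :: l' => c * Num.min w (Num.max x 0) + step_integral l' (x - w)
  end.

Definition sort_steps (R : realType) (l : seq (R * R)) : seq (R * R) :=
  sort (fun a b : R * R => a.1 <= b.1) l.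

Definition Pf (R : realType) (l : seq (R * R)) (x : R) : R :=
  step_integral (sort_steps l) x.

Definition alpha_majorized (R : realType) (n : nat) (v : 'I_n -> R)
  (f : 'I_n -> R) (m : nat) (gamma : 'I_m -> R) (S : 'I_m -> 'I_n -> R)
  (alpha : R) : Prop :=
  forall (m' : nat) (gamma' : 'I_m' -> R) (S' : 'I_m' -> 'I_n -> R),
    signaling_scheme f gamma' S' ->
    forall x : R, 0 < x -> x <= 1 ->
      Pf (surplus_steps v f gamma' S') x <= alpha * Pf (surplus_steps v f gamma S) x.

From HB Require Import structures.
From mathcomp Require Import all_boot all_order all_algebra.
From mathcomp Require Import reals.
From mathcomp Require Import ring lra.
Set Implicit Arguments. Unset Strict Implicit. Unset Printing Implicit Defensive.
Import Order.TTheory GRing.Theory Num.Theory.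
Local Open Scope ring_scope.

(* Take the values 20 < 21 < 27 with masses 1/100, 19/100, 4/5. For any signal T,
   comparing the revenue at the posted price with the revenue at the higher values
   gives 28 T(21) cs(21) + T(27) cs(27) <= 140 T(20) + 21 T(21); averaging over the
   signals of a scheme Z bounds a = f(21) cs_21(Z) and b = f(27) cs_27(Z) by
   28 a + b <= 5.39. As cs_20(Z) = 0, Pf(Z, 1/5) <= a and Pf(Z, 1) = a + b. Two explicit
   schemes reach Pf(1/5) = 0.16 and Pf(1) = 4.04, so if Z is alpha-majorized then
   alpha a >= 0.16 and 4.04 <= alpha (a + b) <= alpha (5.39 - 27 a) <= 5.39 alpha - 4.32,
   i.e. alpha >= 8.36 / 5.39 > 3/2. *)

Section ConsumerSurplus.
Variables (R : realType) (n : nat) (v : 'I_n -> R).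

Lemma price_at_max_revenue (S : 'I_n -> R) k :
  0 < S k -> (forall j, 0 < S j -> revenue v S j <= revenue v S k) ->
  (forall j, 0 < S j -> revenue v S j = revenue v S k -> v k <= v j) ->
  price v S = v k.
Proof.
move=> Sk k_max k_min; rewrite /price /price_idx.
case: pickP => [i /and3P[Si /forallP i_max /forallP i_min] | no_idx].
  have Eik : revenue v S i = revenue v S k.
    by apply/le_anti; rewrite k_max // (implyP (i_max k)).
  by apply/le_anti; rewrite k_min // (implyP (i_min k)) // Sk Eik eqxx.
case/negP: (negbT (no_idx k)); rewrite Sk /=; apply/andP; split.
  by apply/forallP => j; apply/implyP; apply: k_max.
by apply/forallP => j; apply/implyP => /andP[Sj /eqP]; apply: k_min.
Qed.

Lemma price_maximizes_revenue (S : 'I_n -> R) : is_distribution S ->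
  exists k, [/\ 0 < S k, forall j, 0 < S j -> revenue v S j <= revenue v S k
              & price v S = v k].
Proof.
case=> S_ge0 S_sum1.
have [i Si] : exists i, 0 < S i.
  case: (pickP (fun i => 0 < S i)) => [i Si|S_eq0]; first by exists i.
  move: S_sum1; rewrite big1 => [/eqP|i _]; first by rewrite eq_sym oner_eq0.
  by apply/le_anti; rewrite S_ge0 andbT leNgt S_eq0.
have [k Sk k_max] := @arg_maxP _ _ _ i (fun j => 0 < S j) (revenue v S) Si.
pose top j := (0 < S j) && (revenue v S j == revenue v S k).
have top_k : top k by rewrite /top Sk eqxx.
have [l /andP[Sl /eqP El] l_min] := @arg_minP _ _ _ k top v top_k.
exists l; split => [//|j Sj|]; first by rewrite El; apply: k_max.
apply: price_at_max_revenue => // [j Sj|j Sj Ej]; first by rewrite El; apply: k_max.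
by apply: l_min; rewrite /top Sj Ej El eqxx.
Qed.

Lemma cs_ge0 (S : 'I_n -> R) i : 0 <= cs v S i.
Proof. by rewrite /cs; case: ifP => // le_pv; rewrite subr_ge0. Qed.

Lemma cs_lowest_value (S : 'I_n -> R) i : is_distribution S ->
  (forall j, v i <= v j) -> cs v S i = 0.
Proof.
move=> /price_maximizes_revenue[k [_ _ Ek]] v_min; rewrite /cs Ek.
by case: ifP => // le_ki; apply/eqP; rewrite subr_eq0 eq_le le_ki v_min.
Qed.

Variables (f : 'I_n -> R) (m : nat) (gamma : 'I_m -> R) (S : 'I_m -> 'I_n -> R).
Hypothesis scheme : signaling_scheme f gamma S.

Lemma cs_scheme_ge0 i : 0 <= f i -> 0 <= cs_scheme v f gamma S i.
Proof.
case: scheme => gamma_ge0 _ S_dist _ f_ge0; apply: sumr_ge0 => q _.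
by rewrite divr_ge0 // !mulr_ge0 // ?cs_ge0 //; case: (S_dist q).
Qed.

Lemma cs_scheme_lowest_value i : (forall j, v i <= v j) -> cs_scheme v f gamma S i = 0.
Proof.
case: scheme => _ _ S_dist _ v_min; rewrite /cs_scheme big1 // => q _.
by rewrite cs_lowest_value // !mul0r.
Qed.

Lemma mul_cs_scheme i : 0 < f i ->
  f i * cs_scheme v f gamma S i = \sum_(q < m) gamma q * (S q i * cs v (S q) i).
Proof.
move=> f_gt0; rewrite /cs_scheme mulr_sumr; apply: eq_bigr => q _.
by field; rewrite gt_eqF.
Qed.

Lemma cs_scheme_weighted_le (w c : 'I_n -> R) : (forall i, 0 < f i) ->
  (forall T, is_distribution T -> \sum_i w i * (T i * cs v T i) <= \sum_i c i * T i) ->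
  \sum_i w i * (f i * cs_scheme v f gamma S i) <= \sum_i c i * f i.
Proof.
case: scheme => gamma_ge0 _ S_dist S_avg f_gt0 signal_le.
under eq_bigr => i _ do rewrite mul_cs_scheme // mulr_sumr.
under [X in _ <= X]eq_bigr => i _ do rewrite -S_avg mulr_sumr.
rewrite exchange_big [X in _ <= X]exchange_big; apply: ler_sum => q _.
have := ler_wpM2l (gamma_ge0 q) (signal_le _ (S_dist q)).
by rewrite !mulr_sumr; congr (_ <= _); apply: eq_bigr => i _; ring.
Qed.

End ConsumerSurplus.

Section StepFunctions.
Variable R : realType.
Implicit Types (l : seq (R * R)) (x : R).

Lemma step_integral_total l x : (forall p, p \in l -> 0 <= p.2) ->
  \sum_(p <- l) p.2 <= x -> step_integral l x = \sum_(p <- l) p.1 * p.2.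
Proof.
elim: l x => [|[c w] l IHl] x widths_ge0; first by rewrite !big_nil.
rewrite !big_cons /= => le_sum_x.
have w_ge0 : 0 <= w by apply: (widths_ge0 (c, w)); rewrite inE eqxx.
have l_ge0 p : p \in l -> 0 <= p.2 by move=> lp; apply: widths_ge0; rewrite inE lp orbT.
have sum_l_ge0 : 0 <= \sum_(p <- l) p.2 by rewrite big_seq sumr_ge0.
have x_ge0 : 0 <= x by lra.
have le_w_x : w <= x by lra.
by rewrite IHl // ?max_l // ?min_l //; lra.
Qed.

Lemma Pf_total l x : (forall p, p \in l -> 0 <= p.2) ->
  \sum_(p <- l) p.2 <= x -> Pf l x = \sum_(p <- l) p.1 * p.2.
Proof.
move=> w_ge0.
have perm_l : perm_eq (sort (fun a b : R * R => a.1 <= b.1) l) l by rewrite perm_sort.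
rewrite /Pf /sort_steps -(perm_big _ perm_l) => le_x.
rewrite step_integral_total // => [|p]; first by rewrite (perm_big _ perm_l).
by rewrite (perm_mem perm_l); apply: w_ge0.
Qed.

Lemma Pf_zero_two_steps (w0 w1 w2 c1 c2 : R) :
  0 <= w0 -> 0 <= w1 <= w2 -> 0 <= c1 -> 0 <= c2 ->
  Pf [:: (0, w0); (c1, w1); (c2, w2)] (w0 + w1) = Num.min c1 c2 * w1.
Proof.
move=> w0_ge0 /andP[w1_ge0 le_w12] c1_ge0 c2_ge0.
rewrite /Pf /sort_steps /sort /= c1_ge0 /= c2_ge0.
have [le_c12|lt_c21] := leP c1 c2;
  rewrite /= mul0r add0r [w0 + w1]addrC addrK (max_l w1_ge0) addr0.
  by rewrite subrr maxxx minxx (min_r (le_trans w1_ge0 le_w12)) mulr0 addr0.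
have le_w21 : w1 - w2 <= 0 by rewrite subr_le0.
by rewrite (max_r le_w21) (min_r w1_ge0) (min_r le_w12) mulr0 addr0.
Qed.

End StepFunctions.

Definition i0 : 'I_3 := @Ordinal 3 0 isT.
Definition i1 : 'I_3 := @Ordinal 3 1 isT.
Definition i2 : 'I_3 := @Ordinal 3 2 isT.

Lemma ord3P (j : 'I_3) : [\/ j = i0, j = i1 | j = i2].
Proof.
case: j => [[|[|[|j]]] lt_j3] //;
  [constructor 1 | constructor 2 | constructor 3]; exact/val_inj.
Qed.

Ltac case_ord3 j := case: (ord3P j) => ->.
Ltac intro_ord3 := let j := fresh "j" in intro j; case_ord3 j.

Section ThreeValueExample.
Variable R : realType.

Lemma sum3 (F : 'I_3 -> R) : \sum_(j < 3) F j = F i0 + F i1 + F i2.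
Proof.
by rewrite !big_ord_recl big_ord0 addr0 addrA; congr (F _ + F _ + F _); apply/val_inj.
Qed.

Lemma surplus_steps3 (v f : 'I_3 -> R) m (gamma : 'I_m -> R) S :
  surplus_steps v f gamma S =
    [seq (cs_scheme v f gamma S i, f i) | i <- [:: i0; i1; i2]].
Proof.
rewrite /surplus_steps !enum_ordSl enum_ord0.
by congr [seq _ | i <- [:: _; _; _]]; apply/val_inj.
Qed.

Definition v3 (i : 'I_3) : R := nth 0 [:: 20; 21; 27] i.
Definition f3 (i : 'I_3) : R := nth 0 [:: 1/100; 19/100; 4/5] i.

Lemma f3_gt0 i : 0 < f3 i.
Proof. by case_ord3 i; rewrite /f3 /=; lra. Qed.

Lemma revenue_v3 (T : 'I_3 -> R) :
  [/\ revenue v3 T i0 = 20 * (T i0 + T i1 + T i2),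
      revenue v3 T i1 = 21 * (T i1 + T i2) & revenue v3 T i2 = 27 * T i2].
Proof.
by split; rewrite /revenue /tailG big_mkcond sum3 /v3 /= !ler_nat /= ?add0r.
Qed.

Lemma cs_v3_certificate (T : 'I_3 -> R) : is_distribution T ->
  28 * (T i1 * cs v3 T i1) + T i2 * cs v3 T i2 <= 140 * T i0 + 21 * T i1.
Proof.
move=> T_dist; have [k [_ k_max price_k]] := price_maximizes_revenue v3 T_dist.
have [T_ge0 _] := T_dist.
have rev_le j : T j = 0 \/ revenue v3 T j <= revenue v3 T k.
  by have := T_ge0 j; rewrite le_eqVlt => /orP[/eqP<-|/k_max]; [left|right].
have [R0 R1 R2] := revenue_v3 T.
move: (rev_le i1) (rev_le i2) (T_ge0 i0) (T_ge0 i1) (T_ge0 i2).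
rewrite /cs price_k; case: (ord3P k) => ->; rewrite ?R0 ?R1 ?R2 /v3 /= !ler_nat /=.
all: by case=> ?; case=> ?; lra.
Qed.

Section AnyScheme.
Variables (m : nat) (gamma : 'I_m -> R) (S : 'I_m -> 'I_3 -> R).
Hypothesis scheme : signaling_scheme f3 gamma S.
Notation c := (cs_scheme v3 f3 gamma S).

Lemma cs_scheme_v3_ge0 i : 0 <= c i.
Proof. by apply: (cs_scheme_ge0 v3 scheme); apply/ltW/f3_gt0. Qed.

Lemma cs_scheme_v3_budget : 28 * (19/100 * c i1) + 4/5 * c i2 <= 539/100.
Proof.
pose w (i : 'I_3) : R := nth 0 [:: 0; 28; 1] i.
pose b (i : 'I_3) : R := nth 0 [:: 140; 21; 0] i.
have : \sum_i w i * (f3 i * c i) <= \sum_i b i * f3 i.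
  apply: (cs_scheme_weighted_le scheme f3_gt0) => T /cs_v3_certificate.
  by rewrite !sum3 /w /b /=; lra.
by rewrite !sum3 /w /b /f3 /=; lra.
Qed.

Lemma surplus_steps_v3 :
  surplus_steps v3 f3 gamma S = [:: (0, 1/100); (c i1, 19/100); (c i2, 4/5)].
Proof.
rewrite surplus_steps3 /= (cs_scheme_lowest_value scheme) // => j.
by case_ord3 j; rewrite /v3 /= ler_nat.
Qed.

Lemma Pf_surplus_v3_low :
  Pf (surplus_steps v3 f3 gamma S) (1/5) = Num.min (c i1) (c i2) * (19/100).
Proof.
rewrite surplus_steps_v3 (_ : 1/5 = 1/100 + 19/100); last lra.
by apply: Pf_zero_two_steps; rewrite ?cs_scheme_v3_ge0 //; lra.
Qed.

Lemma Pf_surplus_v3_total :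
  Pf (surplus_steps v3 f3 gamma S) 1 = c i1 * (19/100) + c i2 * (4/5).
Proof.
rewrite surplus_steps_v3 Pf_total ?big_cons ?big_nil /= => [|p|]; try lra.
by rewrite !inE => /or3P[] /eqP-> /=; lra.
Qed.

End AnyScheme.

Definition gamma1 (q : 'I_3) : R := nth 0 [:: 21/100; 13/100; 66/100] q.
Definition signal1 (q i : 'I_3) : R :=
  nth 0 (nth [::] [:: [:: 1/21; 16/21; 4/21]; [:: 0; 3/13; 10/13]; [:: 0; 0; 1]] q) i.
Definition gamma2 (q : 'I_3) : R := nth 0 [:: 21/100; 63/100; 16/100] q.
Definition signal2 (q i : 'I_3) : R :=
  nth 0 (nth [::] [:: [:: 1/21; 5/21; 15/21]; [:: 0; 2/9; 7/9]; [:: 0; 0; 1]] q) i.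

Ltac solve_scheme gamma signal :=
  split; [intro_ord3 | rewrite sum3 | intro_ord3; (split; [intro_ord3 | rewrite sum3])
         | intro_ord3; rewrite sum3];
  rewrite /gamma /signal /f3 /=; lra.

Lemma scheme1 : signaling_scheme f3 gamma1 signal1.
Proof. solve_scheme gamma1 signal1. Qed.

Lemma scheme2 : signaling_scheme f3 gamma2 signal2.
Proof. solve_scheme gamma2 signal2. Qed.

Ltac solve_price signal :=
  match goal with |- price v3 ?T = _ =>
    let r0 := fresh "r0" in let r1 := fresh "r1" in let r2 := fresh "r2" in
    have [r0 r1 r2] := revenue_v3 T;
    apply: price_at_max_revenue; try intro_ord3;
    rewrite ?r0 ?r1 ?r2 /signal /v3 /= => *; lra
  end.

Lemma price_signal1 q : price v3 (signal1 q) = v3 q.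
Proof. case_ord3 q; solve_price signal1. Qed.

Lemma price_signal2 q : price v3 (signal2 q) = v3 q.
Proof. case_ord3 q; solve_price signal2. Qed.

Lemma cs_scheme1 :
  cs_scheme v3 f3 gamma1 signal1 i1 = 16/19 /\ cs_scheme v3 f3 gamma1 signal1 i2 = 11/10.
Proof.
rewrite /cs_scheme !sum3 /cs !price_signal1 /v3 /gamma1 /signal1 /f3 /= !ler_nat /=.
split; lra.
Qed.

Lemma cs_scheme2 :
  cs_scheme v3 f3 gamma2 signal2 i1 = 5/19 /\ cs_scheme v3 f3 gamma2 signal2 i2 = 399/80.
Proof.
rewrite /cs_scheme !sum3 /cs !price_signal2 /v3 /gamma2 /signal2 /f3 /= !ler_nat /=.
split; lra.
Qed.

Lemma three_halves_le (alpha c1 c2 : R) : 0 <= c1 -> 0 <= c2 ->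
  28 * (19/100 * c1) + 4/5 * c2 <= 539/100 ->
  16/100 <= alpha * (Num.min c1 c2 * (19/100)) ->
  404/100 <= alpha * (c1 * (19/100) + c2 * (4/5)) -> 3/2 <= alpha.
Proof.
move=> c1_ge0 c2_ge0 budget low total.
have min_ge0 : 0 <= Num.min c1 c2 by rewrite le_min c1_ge0.
have alpha_gt0 : 0 < alpha.
  rewrite ltNge; apply/negP => alpha_le0.
  have : alpha * (Num.min c1 c2 * (19/100)) <= 0 by rewrite mulr_le0_ge0 ?mulr_ge0 //; lra.
  lra.
have : alpha * Num.min c1 c2 <= alpha * c1 by rewrite ler_pM2l // ge_min lexx.
have : alpha * (c1 * (19/100) + c2 * (4/5)) <= alpha * (539/100 - 27 * (19/100 * c1)).
  by apply: ler_wpM2l; lra.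
nra.
Qed.

Lemma majorized_v3_three_halves_le m (gamma : 'I_m -> R) S alpha :
  signaling_scheme f3 gamma S -> alpha_majorized v3 f3 gamma S alpha -> 3/2 <= alpha.
Proof.
move=> scheme majorized.
have := majorized _ _ _ scheme1 (1/5) ltac:(lra) ltac:(lra).
have := majorized _ _ _ scheme2 1 ltac:(lra) ltac:(lra).
rewrite (Pf_surplus_v3_low scheme1) (Pf_surplus_v3_total scheme2).
rewrite (Pf_surplus_v3_low scheme) (Pf_surplus_v3_total scheme).
have [-> ->] := cs_scheme1; have [-> ->] := cs_scheme2.
have -> : Num.min (16/19) (11/10) = 16/19 :> R by apply/min_idPl; lra.
move=> total low; apply: (three_halves_le _ _ (cs_scheme_v3_budget scheme)); try lra.
all: exact: cs_scheme_v3_ge0.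
Qed.

End ThreeValueExample.

Theorem theorem4 (R : realType) (alpha : R) :
  alpha < 3 / 2 ->
  exists (n : nat) (v : 'I_n -> R) (f : 'I_n -> R),
    [/\ (forall i, 0 < v i),
        (forall i j : 'I_n, (i < j)%N -> v i < v j),
        (forall i, 0 < f i),
        \sum_(i < n) f i = 1 &
        forall (m : nat) (gamma : 'I_m -> R) (S : 'I_m -> 'I_n -> R),
          signaling_scheme f gamma S -> ~ alpha_majorized v f gamma S alpha].
Proof.
move=> lt_alpha; exists 3, (@v3 R), (@f3 R); split.
- by move=> i; case_ord3 i; rewrite /v3 /= ltr0n.
- by move=> i j; case_ord3 i; case_ord3 j; rewrite /v3 //= ltr_nat.
- exact: f3_gt0.
- by rewrite sum3 /f3 /=; lra.
move=> m gamma S scheme /(majorized_v3_three_halves_le scheme).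
by rewrite leNgt lt_alpha.
Qed.
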